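(* Let $\lambda<\eta$, $\theta_k,z_k\in\mathbb{R}^d$ with $z_k\ne0$ and $\|z_k-\nabla f(\theta_k)\|\le(1-\eta)\|z_k\|$. Let $\alpha_k\in\mathbb{R}$, $\theta_{k+1}=\theta_k-\alpha_kz_k$, $\epsilon_k,\epsilon_{k+1}\ge0$, and $\tilde{x}(\theta_k),\tilde{x}(\theta_{k+1})$ with $\|\tilde{x}(\theta_j)-\hat{x}(\theta_j)\|\le\epsilon_j$ ($j=k,k+1$). Let $w_k=\|\nabla g(\tilde{x}(\theta_k))\|+\|\nabla g(\tilde{x}(\theta_{k+1}))\|$, $\bar{\epsilon}_k=\max\{\epsilon_k,\epsilon_{k+1}\}$ and $$s_k=\frac{1}{2L_{\nabla g}}\Big(\sqrt{w_k^2+\tfrac{L_{\nabla g}}{L_{\nabla f}}(\eta-\lambda)^2\|z_k\|^2}-w_k\Big).$$ If $\bar{\epsilon}_k\in[0,s_k)$, then $$\hat{s}_k=\sqrt{(\eta-\lambda)^2-\frac{4L_{\nabla f}(w_k\bar{\epsilon}_k+L_{\nabla g}\bar{\epsilon}_k^2)}{\|z_k\|^2}}$$ is a positive real number, the numbers $\underline{\alpha}_k=\frac{1}{L_{\nabla f}}(\eta-\lambda-\hat{s}_k)$, $\overline{\alpha}_k=\frac{1}{L_{\nabla f}}(\eta-\lambda+\hat{s}_k)$ satisfy $0\le\underline{\alpha}_k<\overline{\alpha}_k$, and if $\alpha_k\in[\underline{\alpha}_k,\overline{\alpha}_k]$ then $\psi(\alpha_k)\le0$. Moreover, viewing $\hat{s}_k,\underline{\alpha}_k,\overline{\alpha}_k$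 as functions of $\bar{\epsilon}_k\in[0,s_k)$ with $w_k$ and $z_k$ fixed, $\hat{s}_k$ is monotonically decreasing in $\bar{\epsilon}_k$, $\lim_{\bar{\epsilon}_k\to0}\underline{\alpha}_k=0$ and $\lim_{\bar{\epsilon}_k\to0}\overline{\alpha}_k=\frac{2(\eta-\lambda)}{L_{\nabla f}}>0$.
   Context: Standing: $0<\eta<1$. $g:\mathbb{R}^n\to\mathbb{R}$ continuously differentiable with $L_{\nabla g}$-Lipschitz gradient, $L_{\nabla g}>0$; $\hat{x}(\theta)=\arg\min_xh(x,\theta)$ for a lower-level function $h$ strongly convex in $x$; $f(\theta)=g(\hat{x}(\theta))$ continuously differentiable with $L_{\nabla f}$-Lipschitz gradient, $L_{\nabla f}>0$. $\psi(\alpha_k)=\overline{U}(\tilde{x}(\theta_{k+1}),\epsilon_{k+1})-\underline{U}(\tilde{x}(\theta_k),\epsilon_k)+\lambda\alpha_k\|z_k\|^2$ with $\overline{U}(x,\epsilon)=g(x)+\|\nabla g(x)\|\epsilon+\frac{L_{\nabla g}}{2}\epsilon^2$, $\underline{U}(x,\epsilon)=g(x)-\|\nabla g(x)\|\epsilon-\frac{L_{\nabla g}}{2}\epsilon^2$. *)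

From HB Require Import structures.
From mathcomp Require Import all_boot all_order all_algebra.
From mathcomp Require Import all_classical all_reals all_analysis.
Set Implicit Arguments. Unset Strict Implicit. Unset Printing Implicit Defensive.
Import Order.TTheory GRing.Theory Num.Theory.
Import numFieldNormedType.Exports.
Local Open Scope ring_scope.

Definition dotv {R : realType} {n : nat} (u v : 'rV[R]_n) : R :=
  \sum_(i < n) u 0 i * v 0 i.
Definition enorm {R : realType} {n : nat} (u : 'rV[R]_n) : R :=
  Num.sqrt (dotv u u).

Definition grad {R : realType} {n : nat} (g : 'rV[R]_n -> R) (x : 'rV[R]_n)
  : 'rV[R]_n := \row_(i < n) ('d g x (delta_mx 0 i : 'rV[R]_n)).

Definition C1_Lipschitz_grad {R : realType} {n : nat} (g : 'rV[R]_n -> R)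
  (L : R) : Prop :=
  (forall x, differentiable g x) /\ continuous (grad g) /\
  (forall x y, enorm (grad g x - grad g y) <= L * enorm (x - y)).

Definition strongly_convex {R : realType} {n : nat} (mu : R)
  (phi : 'rV[R]_n -> R) : Prop :=
  forall (x y : 'rV[R]_n) (t : R), 0 <= t <= 1 ->
    phi (t *: x + (1 - t) *: y)
      <= t * phi x + (1 - t) * phi y - mu / 2 * t * (1 - t) * enorm (x - y) ^+ 2.

Definition Ubar {R : realType} {n : nat} (g : 'rV[R]_n -> R) (Lg : R)
  (x : 'rV[R]_n) (e : R) : R :=
  g x + enorm (grad g x) * e + Lg / 2 * e ^+ 2.
Definition Ulow {R : realType} {n : nat} (g : 'rV[R]_n -> R) (Lg : R)
  (x : 'rV[R]_n) (e : R) : R :=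
  g x - enorm (grad g x) * e - Lg / 2 * e ^+ 2.

Definition psi {R : realType} {n d : nat} (g : 'rV[R]_n -> R) (Lg lam : R)
  (xt : 'rV[R]_d -> 'rV[R]_n) (thk thk1 : 'rV[R]_d) (ek ek1 : R)
  (z : 'rV[R]_d) (alpha : R) : R :=
  Ubar g Lg (xt thk1) ek1 - Ulow g Lg (xt thk) ek + lam * alpha * enorm z ^+ 2.

From HB Require Import structures.
From mathcomp Require Import all_boot all_order all_algebra.
From mathcomp Require Import all_classical all_reals all_analysis.
From mathcomp Require Import ring lra.
Set Implicit Arguments.
Unset Strict Implicit.
Unset Printing Implicit Defensive.
Import Order.TTheory GRing.Theory Num.Theory.
Import numFieldNormedType.Exports.
Local Open Scope classical_set_scope.
Local Open Scope ring_scope.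

(* Descent lemma: a function with L-Lipschitz gradient differs from its
   linearisation at x by at most L/2 |v|^2.  For g at the inexact solutions this
   traps g(xhat) between Ulow and Ubar, so psi(alpha) exceeds the true change
   f(theta_{k+1}) - f(theta_k) + lam alpha |z|^2 by at most
   2 (w ebar + Lg ebar^2).  For f along -alpha z, the angle condition gives
   <grad f, z> >= eta |z|^2, so the true change is at most
   |z|^2 (Lf alpha^2 / 2 - eta alpha).  Hence psi(alpha) is bounded by a
   quadratic in alpha with roots alpha_lo, alpha_hi, whose (scaled) discriminant
   shat^2 is positive exactly when ebar < s_k and is a continuous decreasing
   function of ebar. *)

Section Euclidean.
Variables (R : realType) (n : nat).
Implicit Types (u v w : 'rV[R]_n).

Lemma dotvC u v : dotv u v = dotv v u.
Proof. by apply: eq_bigr => i _; rewrite mulrC. Qed.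

Lemma dotvDl u v w : dotv (u + v) w = dotv u w + dotv v w.
Proof. by rewrite /dotv -big_split; apply: eq_bigr => i _; rewrite mxE mulrDl. Qed.

Lemma dotvZl a u v : dotv (a *: u) v = a * dotv u v.
Proof. by rewrite /dotv mulr_sumr; apply: eq_bigr => i _; rewrite mxE mulrA. Qed.

Lemma dotvZr a u v : dotv v (a *: u) = a * dotv v u.
Proof. by rewrite !(dotvC v) dotvZl. Qed.

Lemma dotvBl u v w : dotv (u - v) w = dotv u w - dotv v w.
Proof. by rewrite dotvDl -scaleN1r dotvZl mulN1r. Qed.

Lemma dotvBr u v w : dotv w (u - v) = dotv w u - dotv w v.
Proof. by rewrite !(dotvC w) dotvBl. Qed.

Lemma dotvv_ge0 u : 0 <= dotv u u.
Proof. by apply: sumr_ge0 => i _; rewrite -expr2 sqr_ge0. Qed.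

Lemma enorm_ge0 u : 0 <= enorm u.
Proof. exact: sqrtr_ge0. Qed.

Lemma enorm_sqr u : enorm u ^+ 2 = dotv u u.
Proof. exact: sqr_sqrtr (dotvv_ge0 u). Qed.

Lemma enormZ a u : enorm (a *: u) = `|a| * enorm u.
Proof.
by rewrite /enorm dotvZl dotvZr mulrA -expr2 sqrtrM ?sqr_ge0 // sqrtr_sqr.
Qed.

Lemma enormN u : enorm (- u) = enorm u.
Proof. by rewrite -scaleN1r enormZ normrN1 mul1r. Qed.

Lemma enormB u v : enorm (u - v) = enorm (v - u).
Proof. by rewrite -enormN opprB. Qed.

Lemma enorm0_eq0 u : enorm u = 0 -> u = 0.
Proof.
move=> /eqP; rewrite sqrtr_eq0 => uu_le0.
have uu0 : dotv u u = 0 by apply/eqP; rewrite eq_le uu_le0 dotvv_ge0.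
have /psumr_eq0P coord0 := uu0; apply/matrixP => i j; rewrite (ord1 i) mxE.
have /eqP := coord0 (fun j _ => sqr_ge0 (u 0 j)) j isT.
by rewrite mulf_eq0 orbb => /eqP.
Qed.

Lemma enorm_gt0 u : u != 0 -> 0 < enorm u.
Proof. by move=> u0; rewrite lt_def enorm_ge0 andbT; apply: contra_neq u0; exact: enorm0_eq0. Qed.

Lemma dotv_le_enorm u v : dotv u v <= enorm u * enorm v.
Proof.
have [->|u0] := eqVneq u 0.
  by rewrite /dotv big1 ?mulr_ge0 ?enorm_ge0 // => i _; rewrite mxE mul0r.
have [->|v0] := eqVneq v 0.
  by rewrite /dotv big1 ?mulr_ge0 ?enorm_ge0 // => i _; rewrite mxE mulr0.
have nu := enorm_gt0 u0; have nv := enorm_gt0 v0.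
(* 0 <= | |v| u - |u| v |^2 = 2 |u| |v| (|u| |v| - <u, v>) *)
have := dotvv_ge0 (enorm v *: u - enorm u *: v).
rewrite !dotvBl !dotvBr !dotvZl !dotvZr -!enorm_sqr (dotvC v u).
set a := enorm u; set b := enorm v; set c := dotv u v => expand_ge0.
have : 0 <= 2 * (a * b) * (a * b - c).
  suff -> : 2 * (a * b) * (a * b - c) =
    b * (b * a ^+ 2) - b * (a * c) - (a * (b * c) - a * (a * b ^+ 2)) by [].
  ring.
by rewrite pmulr_rge0 ?subr_ge0 // mulr_gt0 // mulr_gt0.
Qed.

Lemma normr_dotv_le u v : `|dotv u v| <= enorm u * enorm v.
Proof.
rewrite ler_norml dotv_le_enorm andbT lerNl -(mulN1r (dotv u v)) -dotvZl.
by rewrite -(enormN u) scaleN1r dotv_le_enorm.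
Qed.

End Euclidean.

Lemma taylor1_bound (R : realType) (phi phi' : R -> R) (M : R) :
  (forall s : R, is_derive s (1 : R) phi (phi' s)) ->
  (forall s, 0 < s < 1 -> `|phi' s - phi' 0| <= M * s) ->
  `|phi 1 - phi 0 - phi' 0| <= M / 2.
Proof.
move=> dphi phi'_lip; set c := phi' 0.
suff signed : forall sg : R, `|sg| <= 1 -> sg * (phi 1 - phi 0 - c) <= M / 2.
  have := signed 1; have := signed (-1); rewrite normrN1 normr1 lexx.
  by move=> /(_ isT) ? /(_ isT) ?; rewrite ler_norml; lra.
move=> sg sg1.
pose F := sg \*: (phi - c \*: @id R) - (M / 2) \*: (@id R * @id R).
have dF (s : R) : is_derive s (1 : R) F (sg *: (phi' s - c *: 1) - (M / 2) *: (s *: 1 + s *: 1)).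
  exact: is_deriveB.
have F10 : F 1 <= F 0.
  apply: (@ler0_derive1_nincr _ F 0 1) => //.
  - move=> s s01; rewrite derive1E derive_val ![_%:A]mulr1.
    have /andP[s0 s1] : 0 < s < 1 by rewrite in_itv/= in s01.
    have := phi'_lip s (introT andP (conj s0 s1)).
    have : `|sg * (phi' s - c)| <= `|phi' s - c|.
      by rewrite normrM ler_piMl.
    rewrite ler_norml -/c => /andP[_] ? ?.
    change (sg * (phi' s - c) - M / 2 * (s + s) <= 0); lra.
  - by apply: derivable_within_continuous => s _; have [] := dF s.
have FE r : F r = sg * (phi r - c * r) - M / 2 * (r * r) by [].
by move: F10; rewrite !FE !mulr0 !mulr1 subr0; lra.
Qed.

Lemma diff_dotv_grad (R : realType) (n : nat) (g : 'rV[R]_n -> R) x v :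
  'd g x v = dotv (grad g x) v.
Proof.
rewrite {1}(matrix_sum_delta v) big_ord1 linear_sum /dotv; apply: eq_bigr => i _.
by rewrite linearZ /= mxE mulrC.
Qed.

Lemma is_derive_along_line (R : realType) (n : nat) (g : 'rV[R]_n -> R) x v t :
  differentiable g (x + t *: v) ->
  is_derive t (1 : R) (fun s : R => g (x + s *: v)) (dotv (grad g (x + t *: v)) v).
Proof.
move=> dg; set y := x + t *: v.
have quotientE : (fun h : R => h^-1 *: (((fun s => g (x + s *: v)) \o shift t) (h *: 1)
                                      - g (x + t *: v)))
               = (fun h : R => h^-1 *: ((g \o shift y) (h *: v) - g y)).
  apply/funext => h /=; congr (_ *: (g _ - _)).
  by rewrite /y [_%:A]mulr1 scalerDl addrCA.
split; first by rewrite /derivable quotientE; exact: diff_derivable.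
by rewrite /derive quotientE -/(derive g y v) deriveE // diff_dotv_grad.
Qed.

Lemma descent_lemma (R : realType) (n : nat) (g : 'rV[R]_n -> R) L x v :
  C1_Lipschitz_grad g L ->
  `|g (x + v) - g x - dotv (grad g x) v| <= L / 2 * enorm v ^+ 2.
Proof.
move=> [dg [_ grad_lip]].
have := @taylor1_bound R (fun s => g (x + s *: v)) (fun s => dotv (grad g (x + s *: v)) v)
  (L * enorm v ^+ 2) (fun s => is_derive_along_line (dg (x + s *: v))).
rewrite scale1r scale0r addr0 mulrAC; apply=> s /andP[s0 _].
rewrite -dotvBl; apply: le_trans (normr_dotv_le _ _) _.
have := grad_lip (x + s *: v) x.
have -> : x + s *: v - x = s *: v by rewrite addrC addKr.
rewrite enormZ gtr0_norm // => lip.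
apply: le_trans (ler_wpM2r (enorm_ge0 v) lip) _.
by rewrite [leRHS]mulrAC expr2 !mulrA.
Qed.

Section ErrorBounds.
Variables (R : realType) (n : nat) (g : 'rV[R]_n -> R) (L : R).
Hypotheses (L_ge0 : 0 <= L) (g_C1 : C1_Lipschitz_grad g L).

Lemma Ulow_Ubar_bracket x y e :
  enorm (x - y) <= e -> Ulow g L x e <= g y <= Ubar g L x e.
Proof.
move=> xy_e; have yx_e : enorm (y - x) <= e by rewrite enormB.
have e0 : 0 <= e := le_trans (enorm_ge0 _) xy_e.
have := descent_lemma x (y - x) g_C1; rewrite subrKC ler_norml.
have lin : `|dotv (grad g x) (y - x)| <= enorm (grad g x) * e.
  exact: le_trans (normr_dotv_le _ _) (ler_wpM2l (enorm_ge0 _) yx_e).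
have quad : L / 2 * enorm (y - x) ^+ 2 <= L / 2 * e ^+ 2.
  by apply: ler_wpM2l; rewrite ?divr_ge0 // !expr2 ler_pM ?enorm_ge0.
move: lin; rewrite /Ulow /Ubar ler_norml => /andP[? ?] /andP[? ?].
by apply/andP; split; lra.
Qed.

Lemma Ubar_sub_Ulow_le x0 x1 y0 y1 e0 e1 :
  enorm (x0 - y0) <= e0 -> enorm (x1 - y1) <= e1 ->
  Ubar g L x1 e1 - Ulow g L x0 e0
    <= g y1 - g y0 + 2 * ((enorm (grad g x0) + enorm (grad g x1)) * Num.max e0 e1
                          + L * Num.max e0 e1 ^+ 2).
Proof.
move=> err0 err1.
have /andP[_ up0] := Ulow_Ubar_bracket err0.
have /andP[low1 _] := Ulow_Ubar_bracket err1.
have e0_max : e0 <= Num.max e0 e1 by rewrite le_max lexx.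
have e1_max : e1 <= Num.max e0 e1 by rewrite le_max lexx orbT.
move: (Num.max e0 e1) e0_max e1_max => eb e0_eb e1_eb.
have mono e x y : enorm (x - y) <= e -> e <= eb ->
    enorm (grad g x) * e <= enorm (grad g x) * eb /\ L * e ^+ 2 <= L * eb ^+ 2.
  move=> err e_eb; have e_ge0 := le_trans (enorm_ge0 _) err.
  split; apply: ler_wpM2l; rewrite ?enorm_ge0 //.
  by rewrite !expr2 ler_pM.
move: up0 low1 (mono _ _ _ err0 e0_eb) (mono _ _ _ err1 e1_eb); rewrite /Ulow /Ubar.
(* lra compares atoms syntactically: abstract the opaque values first *)
generalize (g x0) (g x1) (g y0) (g y1) (enorm (grad g x0)) (enorm (grad g x1)).
move=> ? ? ? ? ? ? ? ? [? ?] [? ?]; lra.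
Qed.

End ErrorBounds.

Lemma descent_step (R : realType) (d : nat) (f : 'rV[R]_d -> R) L th z alpha eta :
  C1_Lipschitz_grad f L ->
  enorm (z - grad f th) <= (1 - eta) * enorm z -> 0 <= alpha ->
  f (th - alpha *: z)
    <= f th - alpha * eta * enorm z ^+ 2 + L / 2 * alpha ^+ 2 * enorm z ^+ 2.
Proof.
move=> f_C1 z_dir alpha0.
have slope : eta * enorm z ^+ 2 <= dotv (grad f th) z.
  have := dotv_le_enorm (z - grad f th) z; rewrite dotvBl -enorm_sqr.
  have := ler_wpM2r (enorm_ge0 z) z_dir; rewrite expr2; lra.
have := descent_lemma th ((- alpha) *: z) f_C1.
rewrite dotvZr enormZ normrN (ger0_norm alpha0) scaleNr exprMn ler_norml => /andP[_].
have := ler_wpM2l alpha0 slope; lra.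
Qed.

Lemma psi_le_quadratic (R : realType) (n d : nat) (g : 'rV[R]_n -> R)
    (xhat xt : 'rV[R]_d -> 'rV[R]_n) (Lg Lf lam eta : R) (th z : 'rV[R]_d)
    (alpha ek ek1 : R) :
  0 <= Lg -> C1_Lipschitz_grad g Lg -> C1_Lipschitz_grad (fun th => g (xhat th)) Lf ->
  enorm (z - grad (fun th => g (xhat th)) th) <= (1 - eta) * enorm z ->
  enorm (xt th - xhat th) <= ek ->
  enorm (xt (th - alpha *: z) - xhat (th - alpha *: z)) <= ek1 -> 0 <= alpha ->
  psi g Lg lam xt th (th - alpha *: z) ek ek1 z alpha
    <= enorm z ^+ 2 * (Lf / 2 * alpha ^+ 2 - (eta - lam) * alpha)
       + 2 * ((enorm (grad g (xt th)) + enorm (grad g (xt (th - alpha *: z))))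
              * Num.max ek ek1 + Lg * Num.max ek ek1 ^+ 2).
Proof.
move=> Lg_ge0 g_C1 f_C1 z_dir err err1 alpha_ge0.
have := Ubar_sub_Ulow_le Lg_ge0 g_C1 err err1.
have /= := descent_step f_C1 z_dir alpha_ge0.
rewrite /psi; set th1 := th - alpha *: z.
generalize (g (xhat th)) (g (xhat th1)) (Ubar g Lg (xt th1) ek1) (Ulow g Lg (xt th) ek).
generalize (enorm z ^+ 2) (enorm (grad g (xt th)) + enorm (grad g (xt th1))).
move: (Num.max ek ek1) => *; lra.
Qed.

Section StepSize.
Variables (R : realType) (a Lf Lg w Z : R).
Hypotheses (a_gt0 : 0 < a) (Lf_gt0 : 0 < Lf) (Lg_gt0 : 0 < Lg)
  (w_ge0 : 0 <= w) (Z_gt0 : 0 < Z).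

(* With [a = eta - lam], [Z = |z_k|], [w = w_k]: [shat], [alpha_lo], [alpha_hi]
   and [eps_max] are the paper's hat s_k, underline alpha_k, overline alpha_k
   and s_k, as functions of [bar eps_k]. *)
Definition disc (e : R) := a ^+ 2 - 4 * Lf * (w * e + Lg * e ^+ 2) / Z ^+ 2.
Definition shat e := Num.sqrt (disc e).
Definition alpha_lo e := Lf^-1 * (a - shat e).
Definition alpha_hi e := Lf^-1 * (a + shat e).
Definition eps_max :=
  (Lg *+ 2)^-1 * (Num.sqrt (w ^+ 2 + Lg / Lf * a ^+ 2 * Z ^+ 2) - w).

Lemma disc0 : disc 0 = a ^+ 2.
Proof. by rewrite /disc expr0n /= !mulr0 addr0 mulr0 mul0r subr0. Qed.

Lemma disc_gt0 e : 0 <= e -> e < eps_max -> 0 < disc e.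
Proof.
move=> e_ge0; set Q := w ^+ 2 + Lg / Lf * a ^+ 2 * Z ^+ 2.
have Q_ge0 : 0 <= Q by rewrite addr_ge0 ?sqr_ge0 // !mulr_ge0 ?sqr_ge0 ?invr_ge0 // ltW.
have Lg2_gt0 : 0 < Lg *+ 2 by rewrite mulrn_wgt0.
rewrite /eps_max -(ltr_pM2l Lg2_gt0) mulrA mulfV ?gt_eqF // mul1r ltrBrDr => lt_sqrtQ.
have : (Lg *+ 2 * e + w) ^+ 2 < Q.
  rewrite -(sqr_sqrtr Q_ge0) ltr_pXn2r // nnegrE ?sqrtr_ge0 //.
  by rewrite addr_ge0 // mulr_ge0 // ltW.
have -> : disc e = Lf * (Q - (Lg *+ 2 * e + w) ^+ 2) / (Lg * Z ^+ 2).
  by rewrite /disc /Q mulr2n; field; rewrite !gt_eqF.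
by rewrite -subr_gt0 => ?; rewrite divr_gt0 ?mulr_gt0 ?exprn_gt0.
Qed.

Lemma disc_decreasing e1 e2 : 0 <= e1 -> e1 < e2 -> disc e2 < disc e1.
Proof.
move=> e1_ge0 e12.
rewrite /disc ltrD2l ltrN2 ltr_pM2r ?invr_gt0 ?exprn_gt0 // ltr_pM2l ?mulr_gt0 //.
apply: ler_ltD; first by rewrite ler_wpM2l // ltW.
by rewrite ltr_pM2l // ltr_pXn2r // nnegrE ltW // (le_lt_trans e1_ge0).
Qed.

Lemma disc_le e : 0 <= e -> disc e <= a ^+ 2.
Proof.
rewrite le_eqVlt => /orP[/eqP <-|e_gt0]; first by rewrite disc0.
by rewrite -disc0 ltW // disc_decreasing.
Qed.

Lemma shat0 : shat 0 = a.
Proof. by rewrite /shat disc0 sqrtr_sqr gtr0_norm. Qed.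

Lemma shat_gt0 e : 0 <= e -> e < eps_max -> 0 < shat e.
Proof. by move=> e_ge0 e_lt; rewrite sqrtr_gt0 disc_gt0. Qed.

Lemma shat_le e : 0 <= e -> shat e <= a.
Proof.
by move=> e_ge0; rewrite -shat0 /shat ler_sqrt ?disc0 ?sqr_ge0 ?disc_le.
Qed.

Lemma shat_decreasing e1 e2 :
  0 <= e1 -> e1 < e2 -> e2 < eps_max -> shat e2 < shat e1.
Proof.
move=> e1_ge0 e12 e2_lt; have e1_lt := lt_trans e12 e2_lt.
by rewrite /shat ltr_sqrt ?disc_gt0 ?disc_decreasing.
Qed.

Lemma alpha_lo_ge0 e : 0 <= e -> 0 <= alpha_lo e.
Proof. by move=> e_ge0; rewrite mulr_ge0 ?invr_ge0 ?subr_ge0 ?shat_le // ltW. Qed.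

Lemma alpha_lo_lt_hi e : 0 < shat e -> alpha_lo e < alpha_hi e.
Proof. by move=> shat_gt0; rewrite ltr_pM2l ?invr_gt0 //; lra. Qed.

(* [alpha_lo e] and [alpha_hi e] are the roots of this quadratic in [al] *)
Lemma quadratic_le0 e al :
  0 <= disc e -> alpha_lo e <= al <= alpha_hi e ->
  Z ^+ 2 * (Lf / 2 * al ^+ 2 - a * al) + 2 * (w * e + Lg * e ^+ 2) <= 0.
Proof.
move=> disc_ge0 /andP[lo_al al_hi].
have roots : (al - alpha_lo e) * (al - alpha_hi e)
             = (al - a / Lf) ^+ 2 - shat e ^+ 2 / Lf ^+ 2.
  by rewrite /alpha_lo /alpha_hi; field; rewrite gt_eqF.
have -> : Z ^+ 2 * (Lf / 2 * al ^+ 2 - a * al) + 2 * (w * e + Lg * e ^+ 2)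
          = Lf * Z ^+ 2 / 2 * ((al - alpha_lo e) * (al - alpha_hi e)).
  by rewrite roots sqr_sqrtr // /disc; field; rewrite !gt_eqF.
rewrite mulr_ge0_le0 ?mulr_ge0_le0 ?subr_ge0 ?subr_le0 //.
by rewrite !mulr_ge0 ?sqr_ge0 ?invr_ge0 // ltW.
Qed.

Lemma disc_continuous : continuous disc.
Proof.
move=> e; apply: cvgB; first exact: cvg_cst.
apply: cvgM; last exact: cvg_cst.
apply: cvgM; first exact: cvg_cst.
apply: cvgD; apply: cvgM; first exact: cvg_cst.
- exact: cvg_id.
- exact: cvg_cst.
- exact: exprn_continuous.
Qed.

Lemma shat_cvg0 : shat e @[e --> 0^'+] --> a.
Proof.
rewrite -shat0; apply: cvg_at_right_filter.
apply: (@continuous_comp _ _ _ disc Num.sqrt).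
  exact: disc_continuous.
exact: sqrt_continuous.
Qed.

Lemma alpha_lo_cvg0 : alpha_lo e @[e --> 0^'+] --> 0.
Proof.
have : alpha_lo e @[e --> 0^'+] --> Lf^-1 * (a - a).
  by apply: cvgM; [exact: cvg_cst | apply: cvgB; [exact: cvg_cst | exact: shat_cvg0]].
by rewrite subrr mulr0.
Qed.

Lemma alpha_hi_cvg0 : alpha_hi e @[e --> 0^'+] --> 2 * a / Lf.
Proof.
have : alpha_hi e @[e --> 0^'+] --> Lf^-1 * (a + a).
  by apply: cvgM; [exact: cvg_cst | apply: cvgD; [exact: cvg_cst | exact: shat_cvg0]].
by rewrite [Lf^-1 * _]mulrC -mulr2n mulr_natl.
Qed.

End StepSize.

Theorem lemma3p8 (R : realType) (n d : nat)
  (eta lam Lg Lf : R)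
  (g : 'rV[R]_n -> R) (h : 'rV[R]_n -> 'rV[R]_d -> R)
  (xhat : 'rV[R]_d -> 'rV[R]_n)
  (xt : 'rV[R]_d -> 'rV[R]_n)
  (thk thk1 z : 'rV[R]_d) (alpha ek ek1 : R) :
  0 < eta < 1 ->
  0 < Lg -> C1_Lipschitz_grad g Lg ->
  (forall th, exists2 mu : R, 0 < mu & strongly_convex mu (fun x => h x th)) ->
  (forall th x, h (xhat th) th <= h x th) ->
  0 < Lf -> C1_Lipschitz_grad (fun th => g (xhat th)) Lf ->
  lam < eta ->
  z != 0 ->
  enorm (z - grad (fun th => g (xhat th)) thk) <= (1 - eta) * enorm z ->
  thk1 = thk - alpha *: z ->
  0 <= ek -> 0 <= ek1 ->
  enorm (xt thk - xhat thk) <= ek ->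
  enorm (xt thk1 - xhat thk1) <= ek1 ->
  let w := enorm (grad g (xt thk)) + enorm (grad g (xt thk1)) in
  let ebar := Num.max ek ek1 in
  let s := (Lg *+ 2)^-1 *
      (Num.sqrt (w ^+ 2 + Lg / Lf * (eta - lam) ^+ 2 * enorm z ^+ 2) - w) in
  let rad := fun e : R =>
      (eta - lam) ^+ 2 - 4 * Lf * (w * e + Lg * e ^+ 2) / enorm z ^+ 2 in
  let shat := fun e : R => Num.sqrt (rad e) in
  let alo := fun e : R => Lf^-1 * (eta - lam - shat e) in
  let ahi := fun e : R => Lf^-1 * (eta - lam + shat e) in
  0 <= ebar < s ->
  [/\ 0 < rad ebar /\ 0 < shat ebar,
      0 <= alo ebar /\ alo ebar < ahi ebar,
      (alo ebar <= alpha <= ahi ebar ->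
         psi g Lg lam xt thk thk1 ek ek1 z alpha <= 0),
      (forall e1 e2 : R, 0 <= e1 -> e1 < e2 -> e2 < s -> shat e2 < shat e1)
    & [/\ alo e @[e --> 0^'+] --> 0,
           ahi e @[e --> 0^'+] --> 2 * (eta - lam) / Lf
         & 0 < 2 * (eta - lam) / Lf]].
Proof.
move=> _ Lg_gt0 g_C1 _ _ Lf_gt0 f_C1 lam_eta z_neq0 z_dir -> _ _.
move=> err_k err_k1 w ebar s rad shat alo ahi /andP[ebar_ge0 ebar_lt].
have a_gt0 : 0 < eta - lam by rewrite subr_gt0.
have Z_gt0 := enorm_gt0 z_neq0.
have w_ge0 : 0 <= w by rewrite addr_ge0 ?enorm_ge0.
have disc_ebar : 0 < rad ebar by apply: disc_gt0.
have shat_ebar : 0 < shat ebar by apply: shat_gt0.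
have alo_ge0 : 0 <= alo ebar by apply: alpha_lo_ge0.
split.
- by split.
- by split; last apply: alpha_lo_lt_hi.
- move=> alpha_in; have alpha_ge0 := le_trans alo_ge0 (andP alpha_in).1.
  exact (le_trans (psi_le_quadratic lam (ltW Lg_gt0) g_C1 f_C1 z_dir err_k err_k1 alpha_ge0)
           (quadratic_le0 Lf_gt0 Z_gt0 (ltW disc_ebar) alpha_in)).
- by move=> e1 e2; apply: shat_decreasing.
- split.
  + exact: alpha_lo_cvg0.
  + exact: alpha_hi_cvg0.
  + by rewrite divr_gt0 ?mulr_gt0.
Qed.
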